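(* A tree $T$ is $\chi_\rho$-critical if and only if it is $\chi_\rho$-vertex-critical.
   Context: A $k$-packing coloring of a graph $G$ is a map $c:V(G)\to\{1,\ldots,k\}$ such that two distinct vertices $u,v$ with $c(u)=c(v)=i$ satisfy $d_G(u,v)>i$ (distance between vertices in different components is infinite); $\chi_\rho(G)$ is the smallest $k$ for which such a coloring exists. $G$ is $\chi_\rho$-critical if $\chi_\rho(H)<\chi_\rho(G)$ for every proper subgraph $H$ of $G$; $G$ is $\chi_\rho$-vertex-critical if $\chi_\rho(G-x)<\chi_\rho(G)$ for every vertex $x\in V(G)$. *)

From mathcomp Require Import all_boot.
Set Implicit Arguments. Unset Strict Implicit. Unset Printing Implicit Defensive.

Section Packing.
Variable V : finType.

(* A graph is given by a vertex set S : {set V} and an edge relation f : rel V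
   (edges only used between vertices of S).
   dist_le S f i u v  <=>  d_H(u,v) <= i in the graph H = (S, f). *)
Fixpoint dist_le (S : {set V}) (f : rel V) (i : nat) (u v : V) : bool :=
  if i is j.+1 then
    dist_le S f j u v || [exists w, [&& dist_le S f j u w, w \in S, v \in S & f w v]]
  else u == v.

(* a k-packing coloring of H = (S, f): colors in {1,...,k} (value 0 forbidden) and
   two distinct vertices with the same color i are at distance > i *)
Definition packing_colorable (S : {set V}) (f : rel V) (k : nat) : bool :=
  [exists c : {ffun V -> 'I_k.+1},
     [forall u, (u \in S) ==> (0 < c u)] &&
     [forall u, forall v,
        [&& u \in S, v \in S, u != v & c u == c v] ==> ~~ dist_le S f (c u) u v]].

Lemma packing_colorable_card (S : {set V}) (f : rel V) :
  packing_colorable S f #|V|.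
Proof.
apply/existsP.
exists [ffun u => inord (enum_rank u).+1 : 'I_#|V|.+1].
apply/andP; split.
  apply/forallP=> u; apply/implyP=> _; rewrite ffunE inordK //.
  by rewrite ltnS; apply: ltn_ord.
apply/forallP=> u; apply/forallP=> v; apply/implyP=> /and4P[_ _ nuv].
rewrite !ffunE => /eqP/(congr1 val) /=.
rewrite !inordK ?ltnS ?ltn_ord // => -[] Euv.
have /enum_rank_inj Euv' : enum_rank u = enum_rank v by apply: val_inj.
by rewrite Euv' eqxx in nuv.
Qed.

Lemma packing_colorable_ex (S : {set V}) (f : rel V) :
  exists k, packing_colorable S f k.
Proof. by exists #|V|; apply: packing_colorable_card. Qed.

Definition chi_rho (S : {set V}) (f : rel V) : nat :=
  ex_minn (packing_colorable_ex S f).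

Definition subgraph (e : rel V) (S : {set V}) (f : rel V) : Prop :=
  [/\ forall u v, f u v -> e u v,
      forall u v, f u v -> (u \in S) && (v \in S)
    & symmetric f].

Definition proper_subgraph (e : rel V) (S : {set V}) (f : rel V) : Prop :=
  subgraph e S f /\ (S != setT \/ exists u v, e u v && ~~ f u v).

Definition del_vertex_rel (e : rel V) (x : V) : rel V :=
  fun u v => [&& u != x, v != x & e u v].

Definition chi_rho_critical (e : rel V) : Prop :=
  forall S f, proper_subgraph e S f -> chi_rho S f < chi_rho setT e.

Definition chi_rho_vertex_critical (e : rel V) : Prop :=
  forall x : V, chi_rho [set~ x] (del_vertex_rel e x) < chi_rho setT e.

Definition simple_graph (e : rel V) : Prop := symmetric e /\ irreflexive e.

Definition is_tree (e : rel V) : Prop :=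
  [/\ 0 < #|V|,
      forall u v, connect e u v
    & forall c : seq V, uniq c -> 3 <= size c -> ~~ cycle e c].

End Packing.

From mathcomp Require Import all_boot.
Set Implicit Arguments. Unset Strict Implicit. Unset Printing Implicit Defensive.

(* Packing colorings are inherited by subgraphs, and G - x is a proper
   subgraph, so criticality implies vertex-criticality.  Conversely, a proper
   subgraph H of a tree G lies in some G - x or in some G - uv.  The first case
   is vertex-criticality itself.  In the second case G - uv is the disjoint
   union of the component A of u, which avoids v, and the component B of v,
   which avoids u; distances inside A are the same in G - v, and those inside
   B in G - u.  Gluing an optimal coloring of G - v on A with one of G - u on
   B gives chi(H) <= chi(G - uv) <= max (chi(G - v)) (chi(G - u)) < chi(G). *)

Section PackingChromaticNumber.
Variable V : finType.
Implicit Types (S : {set V}) (f : rel V).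

Lemma dist_le_sub S S' f f' :
  S \subset S' -> subrel f f' ->
  forall i a b, dist_le S f i a b -> dist_le S' f' i a b.
Proof.
move=> sSS' sff'; elim=> [//|i IH] a b /=.
case/orP=> [/IH->//|/existsP[w /and4P[aw wS bS fwb]]].
apply/orP; right; apply/existsP; exists w.
by rewrite IH // (subsetP sSS' _ wS) (subsetP sSS' _ bS) sff'.
Qed.

Lemma dist_le_closed S S' f f' (A : {set V}) :
  A \subset S' -> (forall x y, x \in A -> f x y -> (y \in A) && f' x y) ->
  forall i a b, a \in A -> dist_le S f i a b -> dist_le S' f' i a b && (b \in A).
Proof.
move=> sAS' closedA i a + aA; elim: i => [b /eqP<-|i IH b /=]; first by rewrite /= eqxx aA.
case/orP=> [/IH/andP[-> ->]//|/existsP[w /and4P[/IH/andP[aw wA] _ _ fwb]]].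
have /andP[bA f'wb] := closedA _ _ wA fwb.
rewrite bA andbT; apply/orP; right; apply/existsP; exists w.
by rewrite aw f'wb (subsetP sAS' _ wA) (subsetP sAS' _ bA).
Qed.

Lemma chi_rhoP S f : packing_colorable S f (chi_rho S f).
Proof. by rewrite /chi_rho; case: ex_minnP. Qed.

Lemma chi_rho_min S f k : packing_colorable S f k -> chi_rho S f <= k.
Proof. by rewrite /chi_rho; case: ex_minnP => m _; apply. Qed.

Lemma packing_colorable_sub S S' f f' k :
  S \subset S' -> subrel f f' ->
  packing_colorable S' f' k -> packing_colorable S f k.
Proof.
move=> sSS' sff' /existsP[c /andP[/forallP c_pos /forallP c_pack]].
apply/existsP; exists c; apply/andP; split.
  by apply/forallP=> w; apply/implyP=> /(subsetP sSS'); apply/implyP.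
apply/forallP=> a; apply/forallP=> b; apply/implyP=> /and4P[aS bS ab cab].
apply/negP=> /(dist_le_sub sSS' sff'); apply/negP/(implyP (forallP (c_pack a) b)).
by rewrite (subsetP sSS' _ aS) (subsetP sSS' _ bS) ab cab.
Qed.

Lemma chi_rho_sub S S' f f' :
  S \subset S' -> subrel f f' -> chi_rho S f <= chi_rho S' f'.
Proof.
by move=> sSS' sff'; apply/chi_rho_min/(packing_colorable_sub sSS' sff')/chi_rhoP.
Qed.

Section Glue.
Variables (S S1 S2 : {set V}) (f f1 f2 : rel V) (A : {set V}).
Hypotheses (sAS1 : A \subset S1) (sCAS2 : ~: A \subset S2).
Hypothesis closedA : forall x y, x \in A -> f x y -> (y \in A) && f1 x y.
Hypothesis closedCA : forall x y, x \in ~: A -> f x y -> (y \in ~: A) && f2 x y.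

Lemma packing_colorable_glue k1 k2 :
  packing_colorable S1 f1 k1 -> packing_colorable S2 f2 k2 ->
  packing_colorable S f (maxn k1 k2).
Proof.
move=> /existsP[c1 /andP[/forallP c1_pos /forallP c1_pack]].
move=> /existsP[c2 /andP[/forallP c2_pos /forallP c2_pack]].
pose c := [ffun w => inord (if w \in A then c1 w : nat else c2 w) : 'I_(maxn k1 k2).+1].
have cE w : (c w : nat) = if w \in A then c1 w : nat else c2 w.
  rewrite ffunE inordK //; case: ifP => _; apply: leq_trans (ltn_ord _) _;
  by rewrite ltnS ?leq_maxl ?leq_maxr.
apply/existsP; exists c; apply/andP; split.
  apply/forallP=> w; apply/implyP=> _; rewrite cE; case: ifPn => wA.
    by apply: (implyP (c1_pos w)); apply: (subsetP sAS1).
  by apply: (implyP (c2_pos w)); apply: (subsetP sCAS2); rewrite inE.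
apply/forallP=> a; apply/forallP=> b; apply/implyP=> /and4P[_ _ ab /eqP cab].
have {}cab : c a = c b :> nat by rewrite cab.
apply/negP; case: (boolP (a \in A)) => aA.
  move=> /(dist_le_closed sAS1 closedA aA)/andP[dab bA].
  have ca : (c a : nat) = c1 a by rewrite cE aA.
  have c1ab : c1 a == c1 b by apply/eqP/val_inj; rewrite /= -ca cab cE bA.
  rewrite ca in dab; move: (implyP (forallP (c1_pack a) b)).
  by rewrite !(subsetP sAS1) // ab c1ab dab => /(_ isT).
have aCA : a \in ~: A by rewrite inE.
move=> /(dist_le_closed sCAS2 closedCA aCA)/andP[dab].
rewrite inE => /negbTE bA.
have ca : (c a : nat) = c2 a by rewrite cE (negbTE aA).
have c2ab : c2 a == c2 b by apply/eqP/val_inj; rewrite /= -ca cab cE bA.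
rewrite ca in dab; move: (implyP (forallP (c2_pack a) b)).
by rewrite !(subsetP sCAS2) ?inE ?bA // ab c2ab dab => /(_ isT).
Qed.

Lemma chi_rho_glue : chi_rho S f <= maxn (chi_rho S1 f1) (chi_rho S2 f2).
Proof. exact/chi_rho_min/packing_colorable_glue/chi_rhoP/chi_rhoP. Qed.

End Glue.

Definition del_edge_rel (e : rel V) (u v : V) : rel V :=
  fun x y => e x y && ~~ ((x == u) && (y == v) || (x == v) && (y == u)).

Definition acyclic (e : rel V) : Prop :=
  forall c : seq V, uniq c -> 3 <= size c -> ~~ cycle e c.

Lemma del_vertex_proper_subgraph (e : rel V) x :
  symmetric e -> proper_subgraph e [set~ x] (del_vertex_rel e x).
Proof.
move=> e_sym; split.
  split=> [a b /and3P[]//|a b /and3P[ax bx _]|a b]; first by rewrite !in_setC1 ax bx.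
  by rewrite /del_vertex_rel e_sym andbCA.
by left; apply/eqP=> /setP/(_ x); rewrite !inE eqxx.
Qed.

Lemma chi_rho_subgraph_del_vertex (e : rel V) S f x :
  subgraph e S f -> x \notin S -> chi_rho S f <= chi_rho [set~ x] (del_vertex_rel e x).
Proof.
move=> [f_e f_S _] xS; apply: chi_rho_sub => [|a b fab].
  by apply/subsetP=> w wS; rewrite in_setC1; apply: contraNneq xS => <-.
have /andP[aS bS] := f_S _ _ fab.
by rewrite /del_vertex_rel f_e // andbT; apply/andP; split; apply: contraNneq xS => <-.
Qed.

Lemma chi_rho_subgraph_del_edge (e : rel V) S f u v :
  subgraph e S f -> ~~ f u v -> chi_rho S f <= chi_rho setT (del_edge_rel e u v).
Proof.
move=> [f_e _ f_sym] fuv; apply: chi_rho_sub => [|a b fab]; first exact: subsetT.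
rewrite /del_edge_rel f_e //=; apply: contraNN fuv.
by case/orP=> /andP[/eqP ea /eqP eb]; rewrite -ea -eb // f_sym.
Qed.

Section TreeEdge.
Variable e : rel V.
Hypotheses (e_sym : symmetric e) (e_irr : irreflexive e) (e_acyc : acyclic e).
Variables u v : V.
Hypothesis e_uv : e u v.

Let g := del_edge_rel e u v.

Lemma del_edge_sym : symmetric g.
Proof.
move=> x y; rewrite /g /del_edge_rel e_sym orbC.
by congr (_ && ~~ (_ || _)); rewrite andbC.
Qed.

(* A shortest path from [u] to [v] in [G - uv], closed by the edge [vu], would
   be a cycle of [G]. *)
Lemma del_edge_disconnected : ~~ connect g u v.
Proof.
apply/negP=> /connectP[p0 /shortenP[p g_p uniq_up _] v_last].
have g_e : subrel g e by move=> x y /andP[].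
apply: (negP (e_acyc uniq_up _)).
  case: p g_p uniq_up v_last => [|y [|z p]] //=.
    by move=> _ _ vu; move: e_uv; rewrite vu e_irr.
  by move=> /andP[/andP[_]] + _ _ vy; rewrite vy !eqxx.
by rewrite /= rcons_path (sub_path g_e g_p) -v_last e_sym.
Qed.

Let A := [set w | connect g u w].

Lemma del_edge_comp_sub : A \subset [set~ v].
Proof.
apply/subsetP=> w; rewrite !inE; apply: contraTneq => ->.
exact: del_edge_disconnected.
Qed.

Lemma del_edge_compC_sub : ~: A \subset [set~ u].
Proof. by apply/subsetP=> w; rewrite !inE; apply: contraNneq => ->. Qed.

Lemma del_edge_comp_closed x y :
  x \in A -> g x y -> (y \in A) && del_vertex_rel e v x y.
Proof.
move=> xA gxy; have yA : y \in A.
  by move: xA; rewrite !inE => ux; apply: connect_trans ux (connect1 gxy).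
have neq_v w : w \in A -> w != v by move/(subsetP del_edge_comp_sub); rewrite in_setC1.
by rewrite yA /del_vertex_rel !neq_v //; case/andP: gxy.
Qed.

Lemma del_edge_compC_closed x y :
  x \in ~: A -> g x y -> (y \in ~: A) && del_vertex_rel e u x y.
Proof.
move=> xCA gxy; have yCA : y \in ~: A.
  move: xCA; rewrite !inE; apply: contra => uy.
  by rewrite (connect_trans uy) // connect1 // del_edge_sym.
have neq_u w : w \in ~: A -> w != u by move/(subsetP del_edge_compC_sub); rewrite in_setC1.
by rewrite yCA /del_vertex_rel !neq_u //; case/andP: gxy.
Qed.

Lemma chi_rho_del_edge :
  chi_rho setT g <= maxn (chi_rho [set~ v] (del_vertex_rel e v))
                         (chi_rho [set~ u] (del_vertex_rel e u)).
Proof.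
exact: chi_rho_glue del_edge_comp_sub del_edge_compC_sub
         del_edge_comp_closed del_edge_compC_closed.
Qed.

End TreeEdge.
End PackingChromaticNumber.

Theorem theorem3p5 (V : finType) (e : rel V) :
  simple_graph e -> is_tree e ->
  (chi_rho_critical e <-> chi_rho_vertex_critical e).
Proof.
move=> [e_sym e_irr] [_ _ e_acyc]; split=> [crit x | vcrit S f [sub_f proper_f]].
  exact/crit/del_vertex_proper_subgraph.
case: proper_f => [S_neqT | [u [v /andP[e_uv f_uv]]]].
  have [x _ xS] : exists2 x, x \in setT & x \notin S by apply/subsetPn; rewrite subTset.
  exact: leq_ltn_trans (chi_rho_subgraph_del_vertex sub_f xS) (vcrit x).
apply: leq_ltn_trans (chi_rho_subgraph_del_edge sub_f f_uv) _.
apply: leq_ltn_trans (chi_rho_del_edge e_sym e_irr e_acyc e_uv) _.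
by rewrite gtn_max !vcrit.
Qed.
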